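(* Let $\tau=(\tau,A,a)$ be a primitive substitution and let $u,v$ be non-empty prefixes of $X_\tau$ with $|u|<|v|$. Then there exist an integer $k\geq 1$ and morphisms $\lambda:R_v\to R_u^+$ and $\kappa:R_u\to R_v^+$ such that $$\tau_v\kappa=\kappa\tau_u,\quad \tau_u\lambda=\lambda\tau_v,\quad \kappa\lambda=\tau_v^k,\quad \lambda\kappa=\tau_u^k.$$
   Context: A substitution is a triple $(\tau,A,a)$: $A$ a finite alphabet, $\tau:A\to A^+$ a morphism (extended by concatenation), $a\in A$ with $\tau(a)$ starting with $a$; its fixed point $X_\tau$ is the unique sequence starting with $a$ with $\tau(X_\tau)=X_\tau$. It is primitive if some power of its matrix $M_\tau$ ($(i,j)$ entry = number of occurrences of $i$ in $\tau(j)$) is positive; then $X_\tau$ is uniformly recurrent. For a non-empty prefix $u$ of a uniformly recurrent sequence $X$, a return word on $u$ is a factor $X_{[i,j-1]}$ where $i<j$ are two successive occurrences of $u$ in $X$; there are finitely many, and $X$ factors uniquely as $X=m_0m_1m_2\cdots$ with each $m_n$ a return word on $u$. Enumerating the return words in order of first appearance in $(m_n)$ gives a bijection $\Theta_u$ from $R_u=\{1,\dots,N\}$ ($N$ the number of return words) to the set of return words, extended to a morphism $R_u^*\to A^*$, which is injective. The return substitution $\tau_u:R_u\to R_u^+$ is the unique morphism with $\Theta_u\tau_u=\tau\Theta_u$ (it exists, and $(\tau_u,R_u,1)$ is a primitive substitution). *)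

From mathcomp Require Import all_boot all_order all_algebra.
Set Implicit Arguments. Unset Strict Implicit. Unset Printing Implicit Defensive.
Import GRing.Theory Num.Theory.

Definition ext (B C : Type) (f : B -> seq C) (w : seq B) : seq C :=
  flatten (map f w).

Definition mpow (B : Type) (f : B -> seq B) (k : nat) (w : seq B) : seq B :=
  iter k (ext f) w.

Definition factor (A : Type) (X : nat -> A) (i n : nat) : seq A :=
  mkseq (fun j => X (i + j)) n.

Definition occurs_at (A : eqType) (X : nat -> A) (u : seq A) (i : nat) : bool :=
  factor X i (size u) == u.

Definition is_prefix (A : eqType) (X : nat -> A) (u : seq A) : bool :=
  occurs_at X u 0.

Definition subst_matrix (A : finType) (tau : A -> seq A) : 'M[int]_#|A| :=
  \matrix_(i, j) Posz (count_mem (enum_val i) (tau (enum_val j))).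

Definition primitive (A : finType) (tau : A -> seq A) : Prop :=
  exists k : nat, (0 < k)%N /\
    forall i j, (0 < (subst_matrix tau ^+ k) i j)%R.

Definition substitution (A : finType) (tau : A -> seq A) (a : A) : Prop :=
  (forall b, tau b != [::]) /\ ohead (tau a) = Some a.

(* X is the fixed point of (tau,A,a): X starts with a and tau(X) = X, i.e. the
   image of every prefix of X is a prefix of X (images are non-empty, so these
   images exhaust tau(X)). *)
Definition fixed_point (A : finType) (tau : A -> seq A) (a : A) (X : nat -> A)
  : Prop :=
  X 0 = a /\ forall n, is_prefix X (ext tau (factor X 0 n)).

Definition occ_enum (A : eqType) (X : nat -> A) (u : seq A) (o : nat -> nat)
  : Prop :=
  (forall n, o n < o n.+1)%N /\
  (forall i, occurs_at X u i <-> exists n, o n = i).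

(* Theta : 'I_N -> seq A is the enumeration Theta_u of the return words on u,
   in order of first appearance in the factorisation X = m_0 m_1 m_2 ...,
   where m_n = X_[o n, o (n+1) - 1] for the enumeration o of the occurrences
   of u (u is a prefix, so o 0 = 0). *)
Definition return_enum (A : eqType) (X : nat -> A) (u : seq A) (N : nat)
  (Theta : 'I_N -> seq A) : Prop :=
  exists o : nat -> nat, occ_enum X u o /\
    let m n := factor X (o n) (o n.+1 - o n) in
    injective Theta /\
    (forall n, exists r, m n = Theta r) /\
    (forall r, exists n, m n = Theta r) /\
    (forall r s : 'I_N, (r < s)%N ->
       forall n, m n = Theta s -> exists2 n', (n' < n)%N & m n' = Theta r).

Definition return_subst (A : eqType) (tau : A -> seq A) (N : nat)
  (Theta : 'I_N -> seq A) (sigma : 'I_N -> seq 'I_N) : Prop :=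
  forall r, ext Theta (sigma r) = ext tau (Theta r).

From mathcomp Require Import all_boot all_order all_algebra zify.
Set Implicit Arguments. Unset Strict Implicit. Unset Printing Implicit Defensive.

(* Since u is a prefix of v, every occurrence of v is an occurrence of u, so each
   return word on v is a product of return words on u; this gives lambda.
   By primitivity, tau^k(u) is longer than v for some k >= 1, so tau^k maps
   occurrences of u in X = tau^k(X) to occurrences of v, and the image of a
   return word on u is a product of return words on v; this gives kappa.
   The four identities hold after applying Theta_u or Theta_v, and these are
   injective on words because return words form a prefix code: no return word
   is followed in X by an occurrence of u starting inside it. *)

Lemma ext_cons B C (f : B -> seq C) x w : ext f (x :: w) = f x ++ ext f w.
Proof. by []. Qed.

Lemma ext_cat B C (f : B -> seq C) w1 w2 : ext f (w1 ++ w2) = ext f w1 ++ ext f w2.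
Proof. by rewrite /ext map_cat flatten_cat. Qed.

Lemma ext_seq1 B C (f : B -> seq C) x : ext f [:: x] = f x.
Proof. by rewrite ext_cons cats0. Qed.

Lemma eq_ext B C (f g : B -> seq C) : f =1 g -> ext f =1 ext g.
Proof. by move=> fg w; rewrite /ext (eq_map fg). Qed.

Lemma ext_comp B C D (f : C -> seq D) (g : B -> seq C) w :
  ext f (ext g w) = ext (fun b => ext f (g b)) w.
Proof. by elim: w => //= x w IH; rewrite !ext_cons ext_cat IH. Qed.

Lemma ext_unit B (w : seq B) : ext (fun b => [:: b]) w = w.
Proof. by elim: w => //= x w IH; rewrite ext_cons IH. Qed.

Lemma mpowS B (f : B -> seq B) k w : mpow f k.+1 w = ext f (mpow f k w).
Proof. by []. Qed.

Lemma mpowSr B (f : B -> seq B) k w : mpow f k.+1 w = mpow f k (ext f w).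
Proof. by rewrite /mpow iterSr. Qed.

Lemma mpowD B (f : B -> seq B) m n w : mpow f (m + n) w = mpow f m (mpow f n w).
Proof. by rewrite /mpow iterD. Qed.

Lemma mpow_nil B (f : B -> seq B) k : mpow f k [::] = [::].
Proof. by elim: k => // k IH; rewrite mpowS IH. Qed.

Lemma mpow_cat B (f : B -> seq B) k w1 w2 :
  mpow f k (w1 ++ w2) = mpow f k w1 ++ mpow f k w2.
Proof. by elim: k => // k IH; rewrite !mpowS IH ext_cat. Qed.

Lemma mpow_ext B C (f : B -> seq B) (g : C -> seq B) k w :
  mpow f k (ext g w) = ext (fun b => mpow f k (g b)) w.
Proof.
elim: w => [|x w IH]; first exact: mpow_nil.
by rewrite !ext_cons mpow_cat IH.
Qed.

Lemma ext_intertwine B C (Th : B -> seq C) (sig : B -> seq B) (tau : C -> seq C) :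
  (forall b, ext Th (sig b) = ext tau (Th b)) ->
  forall w, ext Th (ext sig w) = ext tau (ext Th w).
Proof. by move=> Hsig w; rewrite !ext_comp; apply: eq_ext. Qed.

Lemma mpow_intertwine B C (Th : B -> seq C) (sig : B -> seq B) (tau : C -> seq C) :
  (forall b, ext Th (sig b) = ext tau (Th b)) ->
  forall k w, ext Th (mpow sig k w) = mpow tau k (ext Th w).
Proof. by move=> Hsig; elim=> // k IH w; rewrite !mpowS (ext_intertwine Hsig) IH. Qed.

Lemma size_ext_ge B C (f : B -> seq C) n w :
  (forall b, n <= size (f b)) -> n * size w <= size (ext f w).
Proof.
move=> Hf; elim: w => [|x w IH]; first by rewrite muln0.
by rewrite ext_cons size_cat /= mulnS leq_add.
Qed.

Lemma size_mpow_ge (B : eqType) (f : B -> seq B) k w :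
  (forall b, f b != [::]) -> size w <= size (mpow f k w).
Proof.
move=> Hf; elim: k => // k IH; rewrite mpowS; apply: leq_trans IH _.
rewrite -[X in X <= _]mul1n; apply: size_ext_ge => b.
by rewrite lt0n size_eq0.
Qed.

Section ConjugateReturnSubstitutions.
Variables (A Bu Bv : Type) (tau : A -> seq A).
Variables (Thu : Bu -> seq A) (tau_u : Bu -> seq Bu).
Variables (Thv : Bv -> seq A) (tau_v : Bv -> seq Bv).
Hypotheses (Thu_inj : injective (ext Thu)) (Thv_inj : injective (ext Thv)).
Hypothesis Htau_u : forall r, ext Thu (tau_u r) = ext tau (Thu r).
Hypothesis Htau_v : forall r, ext Thv (tau_v r) = ext tau (Thv r).
Variables (k : nat) (lambda : Bv -> seq Bu) (kappa : Bu -> seq Bv).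
Hypothesis Hlambda : forall r, ext Thu (lambda r) = Thv r.
Hypothesis Hkappa : forall r, ext Thv (kappa r) = mpow tau k (Thu r).

Lemma ext_lambda w : ext Thu (ext lambda w) = ext Thv w.
Proof. by rewrite ext_comp; apply: eq_ext. Qed.

Lemma ext_kappa w : ext Thv (ext kappa w) = mpow tau k (ext Thu w).
Proof. by rewrite ext_comp mpow_ext; apply: eq_ext. Qed.

Lemma return_substitutions_conjugate :
  [/\ forall r, ext tau_v (kappa r) = ext kappa (tau_u r),
      forall r, ext tau_u (lambda r) = ext lambda (tau_v r),
      forall r, ext kappa (lambda r) = mpow tau_v k [:: r] &
      forall r, ext lambda (kappa r) = mpow tau_u k [:: r]].
Proof.
split=> r.
- apply: Thv_inj.
  by rewrite (ext_intertwine Htau_v) Hkappa ext_kappa Htau_u -mpowS mpowSr.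
- by apply: Thu_inj; rewrite (ext_intertwine Htau_u) Hlambda ext_lambda Htau_v.
- by apply: Thv_inj; rewrite ext_kappa Hlambda (mpow_intertwine Htau_v) ext_seq1.
- by apply: Thu_inj; rewrite ext_lambda Hkappa (mpow_intertwine Htau_u) ext_seq1.
Qed.

End ConjugateReturnSubstitutions.

Lemma size_factor A (X : nat -> A) i n : size (factor X i n) = n.
Proof. exact: size_mkseq. Qed.

Lemma factorD A (X : nat -> A) i m n :
  factor X i (m + n) = factor X i m ++ factor X (i + m) n.
Proof.
rewrite /factor /mkseq iotaD map_cat; congr (_ ++ _).
rewrite add0n -{1}(addn0 m) iotaDl -map_comp; apply: eq_map => j /=.
by rewrite addnA.
Qed.

Lemma take_factor A (X : nat -> A) i m n :
  m <= n -> take m (factor X i n) = factor X i m.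
Proof. by move=> mn; rewrite -(subnKC mn) factorD take_size_cat // size_factor. Qed.

Lemma drop_factor A (X : nat -> A) i m n :
  m <= n -> drop m (factor X i n) = factor X (i + m) (n - m).
Proof. by move=> mn; rewrite -{1}(subnKC mn) factorD drop_size_cat // size_factor. Qed.

Lemma take_cat_eq A n (t y z : seq A) :
  take n y = take n z -> take n (t ++ y) = take n (t ++ z).
Proof.
move=> yz; rewrite !take_cat; case: ifP => // _; congr (_ ++ _).
by rewrite -(take_takel _ (leq_subr (size t) n)) yz take_takel // leq_subr.
Qed.

Lemma occurs_at_prefix (A : eqType) (X : nat -> A) u v i :
  is_prefix X u -> is_prefix X v -> size u <= size v ->
  occurs_at X v i -> occurs_at X u i.
Proof.
move=> /eqP Xu /eqP Xv uv /eqP Xiv; apply/eqP.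
by rewrite -(take_factor X i uv) Xiv -Xv take_factor.
Qed.

Definition return_word (A : Type) (X : nat -> A) (o : nat -> nat) n :=
  factor X (o n) (o n.+1 - o n).

Lemma return_enumP (A : eqType) (X : nat -> A) u N (Th : 'I_N -> seq A) :
  return_enum X u Th ->
  exists o, [/\ occ_enum X u o, injective Th,
    forall n, exists r, return_word X o n = Th r &
    forall r, exists n, return_word X o n = Th r].
Proof. by case=> o [? [? [? [? _]]]]; exists o. Qed.

Section ReturnWords.
Variables (A : eqType) (X : nat -> A) (u : seq A) (o : nat -> nat).
Hypothesis Ho : occ_enum X u o.

Lemma ltn_occ m n : (o m < o n) = (m < n).
Proof.
have o_mono : {homo o : i j / i < j} by apply: homo_ltn; [exact: ltn_trans | exact: Ho.1].
apply/idP/idP; last exact: o_mono.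
by apply: contraTT; rewrite -!leqNgt leq_eqVlt => /predU1P[-> | /o_mono/ltnW].
Qed.

Lemma leq_occ m n : (o m <= o n) = (m <= n).
Proof. by rewrite leqNgt ltn_occ -leqNgt. Qed.

Lemma occurs_occ n : occurs_at X u (o n).
Proof. by apply/(Ho.2 _).2; exists n. Qed.

Lemma not_occurs_between n i : o n < i < o n.+1 -> ~~ occurs_at X u i.
Proof.
move=> /andP[lt_ni lt_in1]; apply/negP => /(Ho.2 _).1 [m om].
by move: lt_ni lt_in1; rewrite -om !ltn_occ; lia.
Qed.

Variables (B : eqType) (Th : B -> seq A).
Hypothesis Hcover : forall n, exists r, return_word X o n = Th r.

Lemma factor_occ_decomposition m n : m <= n ->
  exists w, size w = n - m /\ ext Th w = factor X (o m) (o n - o m).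
Proof.
elim: n => [|n IH]; first by rewrite leqn0 => /eqP ->; exists [::]; rewrite !subnn.
rewrite leq_eqVlt => /predU1P[-> | ]; first by exists [::]; rewrite !subnn.
rewrite ltnS => mn; have [w [size_w Hw]] := IH mn; have [r Hr] := Hcover n.
have le_omn : o m <= o n by rewrite leq_occ.
have le_on : o n <= o n.+1 by rewrite leq_occ.
exists (w ++ [:: r]); split; first by rewrite size_cat size_w /=; lia.
have -> : o n.+1 - o m = (o n - o m) + (o n.+1 - o n) by lia.
by rewrite ext_cat ext_seq1 Hw -Hr factorD subnKC.
Qed.

Lemma factor_occurs_decomposition i j :
  occurs_at X u i -> occurs_at X u j -> i < j ->
  exists w, w != [::] /\ ext Th w = factor X i (j - i).
Proof.
move=> /(Ho.2 _).1 [m <-] /(Ho.2 _).1 [n <-]; rewrite ltn_occ => mn.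
have [w [size_w Hw]] := factor_occ_decomposition (ltnW mn).
by exists w; rewrite -size_eq0 size_w; split => //; lia.
Qed.

Hypothesis Hocc : forall r, exists n, return_word X o n = Th r.
Hypothesis Th_inj : injective Th.

Lemma return_word_catu r : exists n,
  size (Th r) = o n.+1 - o n /\ Th r ++ u = factor X (o n) (size (Th r) + size u).
Proof.
have [n <-] := Hocc r; exists n; rewrite size_factor; split => //.
have le_on : o n <= o n.+1 by rewrite leq_occ.
by rewrite factorD subnKC // (eqP (occurs_occ n.+1)).
Qed.

Lemma return_word_neq0 r : Th r != [::].
Proof.
have [n [size_r _]] := return_word_catu r.
by rewrite -size_eq0 size_r subn_eq0 -ltnNge ltn_occ.
Qed.

Lemma take_ext_catu w : take (size u) (ext Th w ++ u) = u.
Proof.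
elim: w => [|r w IH]; first by rewrite take_size.
have [n [size_r Hr]] := return_word_catu r.
rewrite ext_cons -catA (@take_cat_eq _ _ _ _ u) ?IH ?take_size // Hr.
by rewrite take_factor ?leq_addl // (eqP (occurs_occ n)).
Qed.

(* Otherwise u would occur strictly inside the return word Th r. *)
Lemma return_word_cat_size r s w1 w2 :
  Th r ++ ext Th w1 = Th s ++ ext Th w2 -> size (Th r) <= size (Th s).
Proof.
move=> E; rewrite leqNgt; apply/negP => lt_sr.
have [n [size_r Hr]] := return_word_catu r.
have le_on : o n <= o n.+1 by rewrite leq_occ.
have s_gt0 : 0 < size (Th s) by rewrite lt0n size_eq0 return_word_neq0.
have /negP[] : ~~ occurs_at X u (o n + size (Th s)).
  by apply: (@not_occurs_between n); apply/andP; split; lia.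
have E' : drop (size (Th s)) (Th r) ++ ext Th w1 ++ u = ext Th w2 ++ u.
  have := congr1 (fun t => drop (size (Th s)) (t ++ u)) E => /=.
  by rewrite -!catA drop_cat lt_sr (@drop_size_cat _ _ (Th s)).
have Hw1 : take (size u) u = take (size u) (ext Th w1 ++ u) by rewrite take_ext_catu take_size.
apply/eqP.
have -> : factor X (o n + size (Th s)) (size u) = take (size u) (drop (size (Th s)) (Th r ++ u)).
  by rewrite Hr drop_factor ?take_factor //; lia.
by rewrite drop_cat lt_sr (take_cat_eq _ Hw1) E' take_ext_catu.
Qed.

Lemma ext_return_word_inj : injective (ext Th).
Proof.
elim=> [|r w1 IH] [|s w2] //; rewrite ?ext_cons.
- by move/esym/(congr1 (@nilp A)); rewrite cat_nilp /nilp size_eq0 (negbTE (return_word_neq0 s)).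
- by move/(congr1 (@nilp A)); rewrite cat_nilp /nilp size_eq0 (negbTE (return_word_neq0 r)).
move=> E; have size_rs : size (Th r) = size (Th s).
  by apply/eqP; rewrite eqn_leq (return_word_cat_size E) (return_word_cat_size (esym E)).
by move/eqP: E; rewrite eqseq_cat // => /andP[/eqP/Th_inj -> /eqP/IH ->].
Qed.

End ReturnWords.

Section FixedPoint.
Variables (A : finType) (tau : A -> seq A) (X : nat -> A).
Hypothesis tau_neq0 : forall b, tau b != [::].
Hypothesis Xfix : forall n, is_prefix X (ext tau (factor X 0 n)).

(* Since tau^k(X) = X, tau^k sends the letter of X at position i to the block of
   X starting at position image_pos k i. *)
Definition image_pos k i := size (mpow tau k (factor X 0 i)).

Lemma mpow_prefixE k n : mpow tau k (factor X 0 n) = factor X 0 (image_pos k n).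
Proof.
elim: k => [|k IH]; first by rewrite /image_pos /= size_factor.
by rewrite /image_pos mpowS IH; apply/esym/eqP; apply: Xfix.
Qed.

Lemma mpow_factor k i j : i <= j ->
  mpow tau k (factor X i (j - i)) = factor X (image_pos k i) (image_pos k j - image_pos k i).
Proof.
move=> ij; have Ej : factor X 0 j = factor X 0 i ++ factor X i (j - i).
  by rewrite -{1}(subnKC ij) factorD.
have := mpow_prefixE k j; rewrite Ej mpow_cat mpow_prefixE.
move/(congr1 (drop (image_pos k i))); rewrite drop_size_cat ?size_factor // => ->.
rewrite drop_factor // /image_pos Ej mpow_cat size_cat; exact: leq_addr.
Qed.

Lemma image_pos_lt k i j : i < j -> image_pos k i < image_pos k j.
Proof.
move=> ij; rewrite /image_pos -(subnKC (ltnW ij)) factorD mpow_cat size_cat add0n.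
rewrite -ltn_subLR ?subnn ?leq_addr //; apply: leq_trans (size_mpow_ge _ _ tau_neq0).
by rewrite size_factor subn_gt0.
Qed.

Lemma occurs_image k u v i : is_prefix X u -> is_prefix X v ->
  size v <= size (mpow tau k u) -> occurs_at X u i -> occurs_at X v (image_pos k i).
Proof.
move=> /eqP Xu /eqP Xv vu /eqP Xiu; apply/eqP.
have := mpow_factor k (leq_addr (size u) i); rewrite addKn Xiu => Eu.
have le_v_image : size v <= image_pos k (size u).
  by move: vu; rewrite -[in mpow _ _ u]Xu mpow_prefixE size_factor.
have le_v_diff : size v <= image_pos k (i + size u) - image_pos k i.
  by move: vu; rewrite Eu size_factor.
rewrite -(take_factor _ _ le_v_diff) -Eu.
by rewrite -[in mpow _ _ u]Xu mpow_prefixE take_factor // Xv.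
Qed.

End FixedPoint.

Lemma count_ext (A : finType) (f : A -> seq A) w c :
  count_mem c (ext f w) = \sum_(l : A) count_mem l w * count_mem c (f l).
Proof.
elim: w => [|x w IH]; first by rewrite big1.
rewrite ext_cons count_cat IH /=.
under [RHS]eq_bigr => l _ do rewrite mulnDl.
rewrite big_split /=; congr (_ + _).
rewrite [RHS](bigD1 x) //= eqxx mul1n big1 ?addn0 // => l /negbTE.
by rewrite eq_sym => ->.
Qed.

Lemma subst_matrix_expS (A : finType) (tau : A -> seq A) k i j :
  (subst_matrix tau ^+ k.+1)%R i j =
    Posz (count_mem (enum_val i) (mpow tau k.+1 [:: enum_val j])).
Proof.
elim: k i j => [|k IH] i j; first by rewrite GRing.expr1 mxE /mpow /= ext_seq1.
rewrite GRing.exprS -mulmxE mxE.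
under eq_bigr => l _ do rewrite IH !mxE.
rewrite -(big_morph Posz PoszD (erefl _)) mpowS count_ext; congr Posz.
rewrite [RHS](reindex (@enum_val A xpredT)) /=; last first.
  by apply: onW_bij; exact: enum_val_bij.
by apply: eq_bigr => l _; rewrite mulnC.
Qed.

Lemma primitive_mpow_mem (A : finType) (tau : A -> seq A) : primitive tau ->
  exists K, 0 < K /\ forall b c, c \in mpow tau K [:: b].
Proof.
case=> -[|k] [] // _ Hpos; exists k.+1; split => // b c.
have := Hpos (enum_rank c) (enum_rank b).
by rewrite subst_matrix_expS !enum_rankK ltz_nat -has_count has_pred1.
Qed.

Lemma primitive_mpow_size_double (A : finType) (tau : A -> seq A) :
  primitive tau -> 1 < #|A| -> exists K, 0 < K /\ forall w, 2 * size w <= size (mpow tau K w).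
Proof.
move=> /primitive_mpow_mem[K [K_gt0 HK]] /card_gt1P[c1 [c2 [_ _ c12]]].
exists K; split=> // w; rewrite -[w in mpow _ _ w]ext_unit mpow_ext.
apply: size_ext_ge => b; move: (HK b c1) (HK b c2).
case: (mpow tau K [:: b]) => [|x [|y s]] //=.
by rewrite !inE => /eqP e1 /eqP e2; rewrite e1 e2 eqxx in c12.
Qed.

Lemma primitive_mpow_size_unbounded (A : finType) (tau : A -> seq A) n :
  primitive tau -> 1 < #|A| ->
  exists k, 0 < k /\ forall w, w != [::] -> n <= size (mpow tau k w).
Proof.
move=> prim A_gt1; have [K [K_gt0 HK]] := primitive_mpow_size_double prim A_gt1.
have grow w m : 0 < size w -> size w + m <= size (mpow tau (K * m) w).
  move=> w_gt0; elim: m => [|m IH]; first by rewrite addn0 muln0.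
  by rewrite mulnS mpowD; apply: leq_trans (HK (mpow tau (K * m) w)); lia.
exists (K * n.+1); split=> [|w]; first by rewrite muln_gt0 K_gt0.
by rewrite -size_eq0 -lt0n => /(grow w n.+1); lia.
Qed.

Lemma occurs_at_card_le1 (A : finType) (X : nat -> A) v i :
  #|A| <= 1 -> is_prefix X v -> occurs_at X v i.
Proof.
move=> /card_le1_eqP A1 /eqP Xv; apply/eqP; rewrite -[RHS]Xv.
by apply: eq_mkseq => j; apply: A1.
Qed.

Lemma occurs_image_prefix (A : finType) (tau : A -> seq A) (X : nat -> A) u v :
  (forall b, tau b != [::]) -> primitive tau ->
  (forall n, is_prefix X (ext tau (factor X 0 n))) ->
  is_prefix X u -> u != [::] -> is_prefix X v ->
  exists k, 0 < k /\ forall i, occurs_at X u i -> occurs_at X v (image_pos tau X k i).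
Proof.
move=> tau_neq0 prim Xfix Xu u_neq0 Xv.
have [A_le1 | A_gt1] := leqP #|A| 1.
  by exists 1; split=> // i _; apply: occurs_at_card_le1.
have [k [k_gt0 Hk]] := primitive_mpow_size_unbounded (size v) prim A_gt1.
by exists k; split=> // i; apply: occurs_image => //; apply: Hk.
Qed.

Unset Implicit Arguments.
Set Strict Implicit.

Theorem proposition8 (A : finType) (tau : A -> seq A) (a : A) (X : nat -> A)
  (Hsub : substitution tau a) (Hprim : primitive tau) (Hfix : fixed_point tau a X)
  (u v : seq A) (Hu0 : u != [::]) (Hv0 : v != [::])
  (Hu : is_prefix X u) (Hv : is_prefix X v) (Huv : (size u < size v)%N)
  (Nu : nat) (Thu : 'I_Nu -> seq A) (tau_u : 'I_Nu -> seq 'I_Nu)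
  (HThu : return_enum X u Thu) (Htau_u : return_subst tau Thu tau_u)
  (Nv : nat) (Thv : 'I_Nv -> seq A) (tau_v : 'I_Nv -> seq 'I_Nv)
  (HThv : return_enum X v Thv) (Htau_v : return_subst tau Thv tau_v) :
  exists k : nat, (1 <= k)%N /\
  exists (lambda : 'I_Nv -> seq 'I_Nu) (kappa : 'I_Nu -> seq 'I_Nv),
    (forall r, lambda r != [::]) /\ (forall r, kappa r != [::]) /\
    (forall r, ext tau_v (kappa r) = ext kappa (tau_u r)) /\
    (forall r, ext tau_u (lambda r) = ext lambda (tau_v r)) /\
    (forall r, ext kappa (lambda r) = mpow tau_v k [:: r]) /\
    (forall r, ext lambda (kappa r) = mpow tau_u k [:: r]).
Proof.
have [ou [Hou Thu_inj HTu HTu2]] := return_enumP HThu.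
have [ov [Hov Thv_inj HTv HTv2]] := return_enumP HThv.
have occ_vu i : occurs_at X v i -> occurs_at X u i := occurs_at_prefix Hu Hv (ltnW Huv).
have [k [k_gt0 occ_uv]] := occurs_image_prefix Hsub.1 Hprim Hfix.2 Hu Hu0 Hv.
have lambdaP r : exists w, w != [::] /\ ext Thu w = Thv r.
  have [n <-] := HTv2 r.
  apply: (factor_occurs_decomposition Hou HTu); rewrite ?(ltn_occ Hov) //;
    by apply: occ_vu; apply: occurs_occ Hov _.
have kappaP r : exists w, w != [::] /\ ext Thv w = mpow tau k (Thu r).
  have [n <-] := HTu2 r; rewrite /return_word (mpow_factor Hfix.2) ?(leq_occ Hou) //.
  apply: (factor_occurs_decomposition Hov HTv); try exact: occ_uv (occurs_occ Hou _).
  by apply: image_pos_lt; [exact: Hsub.1 | rewrite (ltn_occ Hou)].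
have [lambda Hlambda] := fin_all_exists lambdaP.
have [kappa Hkappa] := fin_all_exists kappaP.
have [kappa_tau_u lambda_tau_v kappa_lambda lambda_kappa] :=
  return_substitutions_conjugate
    (ext_return_word_inj Hou HTu2 Thu_inj) (ext_return_word_inj Hov HTv2 Thv_inj)
    Htau_u Htau_v (fun r => (Hlambda r).2) (fun r => (Hkappa r).2).
exists k; split=> //; exists lambda, kappa.
by split=> [r | ]; [case: (Hlambda r) | split=> // r; case: (Hkappa r)].
Qed.
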